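(* Let $1\le k\le d$ be fixed. Then: (a) $0\le\mu_k(\rho)\le\log k$ for all $d$-dimensional states $\rho$; (b) $\mu_k(\rho)=\inf\{\nu:\ \Pi_I\rho\Pi_I\le2^\nu\Delta(\rho)\ \text{for all } I\subseteq[d] \text{ with } |I|\le k\}$; (c) $\mu_k$ is monotone under SIO: $\mu_k(\Lambda(\rho))\le\mu_k(\rho)$ for every SIO $\Lambda$ and every state $\rho$; (d) $\mu_k$ is lower semicontinuous.
   Context: Fixed computational basis $\{|i\rangle\}_{i=1}^d$; $\Delta(X)=\sum_i|i\rangle\langle i|X|i\rangle\langle i|$; $\Pi_I=\sum_{i\in I}|i\rangle\langle i|$; logs base 2; $\|\cdot\|_\infty$ is the operator norm. $R^\rho=\Delta(\rho)^{-1/2}\rho\,\Delta(\rho)^{-1/2}$ with the inverse taken on the support, and $\mu_k(\rho)=\max_{I\subseteq[d],|I|\le k}\log\|\Pi_IR^\rho\Pi_I\|_\infty$. SIO (on $\mathbb C^d$): channels $\Lambda(X)=\sum_\alpha K_\alpha XK_\alpha^\dagger$ where each $K_\alpha$ and $K_\alpha^\dagger$ maps every computational basis vector to a multiple of a computational basis vector. *)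

From HB Require Import structures.
From mathcomp Require Import all_boot all_order all_algebra.
From mathcomp Require Import all_classical all_reals all_analysis.
From mathcomp.real_closed Require Import complex.

Set Implicit Arguments.
Unset Strict Implicit.
Unset Printing Implicit Defensive.
Import Order.TTheory GRing.Theory Num.Theory.
Local Open Scope ring_scope.

Section Defs.
Context {R : realType}.
Local Notation C := R[i].

Definition adj {m n} (A : 'M[C]_(m, n)) : 'M[C]_(n, m) := (map_mx Num.conj A)^T.

Definition psd {d} (A : 'M[C]_d) : Prop :=
  forall v : 'cV[C]_d, 0 <= (adj v *m A *m v) 0 0.

Definition loewner_le {d} (A B : 'M[C]_d) : Prop := psd (B - A).

Definition is_state {d} (rho : 'M[C]_d) : Prop := psd rho /\ \tr rho = 1.

Definition dephase {d} (X : 'M[C]_d) : 'M[C]_d :=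
  \matrix_(i, j) (if i == j then X i i else 0).

Definition projI {d} (I : {set 'I_d}) : 'M[C]_d :=
  \matrix_(i, j) (if (i == j) && (i \in I) then 1 else 0).

(* Delta(rho)^{-1/2} with inverse taken on the support: Delta(rho) is diagonal
   with entries rho_ii, so this is the diagonal matrix with entries
   rho_ii^{-1/2} if rho_ii > 0 and 0 otherwise. *)
Definition dephase_invsqrt {d} (rho : 'M[C]_d) : 'M[C]_d :=
  \matrix_(i, j) (if (i == j) && (0 < complex.Re (rho i i))
                  then ((Num.sqrt (complex.Re (rho i i)))^-1)%:C%C else 0).

Definition Rmat {d} (rho : 'M[C]_d) : 'M[C]_d :=
  dephase_invsqrt rho *m rho *m dephase_invsqrt rho.

Definition vnorm {d} (v : 'cV[C]_d) : R :=
  Num.sqrt (\sum_i (complex.Re (v i 0) ^+ 2 + complex.Im (v i 0) ^+ 2)).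

Definition opnorm {d} (A : 'M[C]_d) : R :=
  sup [set x : R | exists v : 'cV[C]_d, vnorm v = 1 /\ x = vnorm (A *m v)].

Definition log2e (x : R) : \bar R :=
  if 0 < x then (ln x / ln 2)%:E else -oo%E.

Definition muk (k : nat) {d} (rho : 'M[C]_d) : \bar R :=
  \big[Order.max/-oo%E]_(I : {set 'I_d} | (#|I| <= k)%N)
     log2e (opnorm (projI I *m Rmat rho *m projI I)).

(* incoherent Kraus operator: maps every basis vector e_j to a multiple of a
   basis vector, i.e. column j has at most one nonzero entry *)
Definition maps_basis_to_basis {d} (K : 'M[C]_d) : Prop :=
  forall j : 'I_d, exists i : 'I_d, forall i' : 'I_d, i' != i -> K i' j = 0.

Definition SIO_kraus {d m} (K : 'I_m -> 'M[C]_d) : Prop :=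
  (forall a, maps_basis_to_basis (K a) /\ maps_basis_to_basis (adj (K a))) /\
  \sum_a adj (K a) *m K a = 1%:M.

Definition kraus_apply {d m} (K : 'I_m -> 'M[C]_d) (X : 'M[C]_d) : 'M[C]_d :=
  \sum_a K a *m X *m adj (K a).

Definition lsc_on_states {d} (f : 'M[C]_d -> \bar R) : Prop :=
  forall rho, is_state rho -> forall t : R, (t%:E < f rho)%E ->
    exists2 eps : R, 0 < eps & forall sigma, is_state sigma ->
      (forall i j, `|sigma i j - rho i j| < eps%:C%C) -> (t%:E < f sigma)%E.

End Defs.

(* Let D be the diagonal matrix Delta(rho)^(1/2).  The substitution
   v = D^(-1) u carries the quadratic form of Pi_I R^rho Pi_I into that of
   Pi_I rho Pi_I and the Euclidean norm into the form of Delta(rho) (rows and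
   columns of rho vanish off the support of its diagonal), so
   ||Pi_I R^rho Pi_I|| <= 2^nu iff Pi_I rho Pi_I <= 2^nu Delta(rho): this is (b).
   The diagonal of R^rho is the indicator of that support, so the 2x2
   principal minors bound ||Pi_I R^rho Pi_I|| by |I|, while a basis vector of
   the support is fixed by Pi_{i} R^rho Pi_{i}: this is (a).
   A strictly incoherent Kraus operator K satisfies
   Delta(K X K^+) = K Delta(X) K^+ and Pi_J K = K Pi_J' with |J'| <= |J|, so
   the inequalities of (b) pass to the output of the channel: this is (c).
   Each such inequality, tested on one vector, is a linear condition on the
   state, so a violation at rho persists near rho: this is (d). *)

From HB Require Import structures.
From mathcomp Require Import all_boot all_order all_algebra.
From mathcomp Require Import all_classical all_reals all_analysis.
From mathcomp.real_closed Require Import complex.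
From mathcomp Require Import ring lra.

Set Implicit Arguments.
Unset Strict Implicit.
Unset Printing Implicit Defensive.
Import Order.TTheory GRing.Theory Num.Theory.
Local Open Scope ring_scope.

Section SesquilinearForms.
Variable R : realType.
Local Notation C := R[i].
Local Open Scope complex_scope.

Definition normc2 (z : C) : R := complex.Re z ^+ 2 + complex.Im z ^+ 2.

Lemma normc2_ge0 z : 0 <= normc2 z.
Proof. by rewrite addr_ge0 ?sqr_ge0. Qed.

Lemma conjc_mul_normc2 z : z^* * z = (normc2 z)%:C.
Proof. by case: z => a b; rewrite /normc2 /=; simpc; congr (_ +i* _); lra. Qed.

Lemma normc2_eq0 z : normc2 z = 0 -> z = 0.
Proof.
case: z => a b; rewrite /normc2 /= => /eqP.
by rewrite paddr_eq0 ?sqr_ge0 // !sqrf_eq0 => /andP[/eqP -> /eqP ->].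
Qed.

Lemma normc2_real (c : R) : normc2 c%:C = c ^+ 2.
Proof. by rewrite /normc2 /= expr0n addr0. Qed.

Lemma normc2_scale (c : R) z : normc2 (c%:C * z) = c ^+ 2 * normc2 z.
Proof. by case: z => a b; rewrite /normc2 /=; simpc; rewrite /=; ring. Qed.

Lemma Re_sqr_le_normc2 z : complex.Re z ^+ 2 <= normc2 z.
Proof. by rewrite lerDl sqr_ge0. Qed.

Lemma conjC_realc (c : R) : Num.conj (c%:C : C) = c%:C.
Proof. exact: conjc_real. Qed.

Lemma ge0c_real (z : C) : 0 <= z -> z = (complex.Re z)%:C /\ 0 <= complex.Re z.
Proof. by case: z => a b; rewrite lecE /= => /andP[/eqP -> h]. Qed.

Lemma ReD (x y : C) : complex.Re (x + y) = complex.Re x + complex.Re y.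
Proof. by case: x; case: y. Qed.

Lemma ReB (x y : C) : complex.Re (x - y) = complex.Re x - complex.Re y.
Proof. by case: x; case: y. Qed.

Lemma Re_sum I (r : seq I) (P : pred I) (F : I -> C) :
  complex.Re (\sum_(i <- r | P i) F i) = \sum_(i <- r | P i) complex.Re (F i).
Proof. by elim/big_rec2: _ => // i y1 y2 _ <-; rewrite ReD. Qed.

Lemma adjM m n p (A : 'M[C]_(m, n)) (B : 'M[C]_(n, p)) :
  adj (A *m B) = adj B *m adj A.
Proof.
apply/matrixP => i j; rewrite !mxE rmorph_sum; apply: eq_bigr => l _.
by rewrite !mxE rmorphM mulrC.
Qed.

Lemma adjK m n (A : 'M[C]_(m, n)) : adj (adj A) = A.
Proof. by apply/matrixP => i j; rewrite !mxE conjCK. Qed.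

Lemma Re_le_Re_norm (z : C) : complex.Re z <= complex.Re `|z|.
Proof.
rewrite normc_def /=; apply: le_trans (ler_norm _) _.
by rewrite -sqrtr_sqr ler_sqrt ?lerDl ?sqr_ge0 // addr_ge0 ?sqr_ge0.
Qed.

Lemma Re_le (x y : C) : x <= y -> complex.Re x <= complex.Re y.
Proof. by rewrite lecE => /andP[]. Qed.

Variable d : nat.
Implicit Types (A B : 'M[C]_d) (v x y : 'cV[C]_d).

Definition vnorm2 v : R := \sum_i normc2 (v i 0).

Lemma vnorm2_ge0 v : 0 <= vnorm2 v.
Proof. by apply: sumr_ge0 => i _; apply: normc2_ge0. Qed.

Lemma vnorm2_0 : vnorm2 0 = 0.
Proof. by rewrite /vnorm2 big1 // => i _; rewrite mxE normc2_real expr0n. Qed.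

Lemma vnorm2_eq0 v : vnorm2 v = 0 -> v = 0.
Proof.
move=> /eqP; rewrite psumr_eq0 => [/allP h|i _]; last exact: normc2_ge0.
apply/matrixP => i j; rewrite (ord1 j) mxE.
by apply/normc2_eq0/eqP/h; rewrite mem_index_enum.
Qed.

Lemma vnorm2_scale (c : R) v : vnorm2 (c%:C *: v) = c ^+ 2 * vnorm2 v.
Proof. by rewrite /vnorm2 mulr_sumr; apply: eq_bigr => i _; rewrite mxE normc2_scale. Qed.

Lemma vnorm2_delta i : vnorm2 (delta_mx i 0) = 1.
Proof.
rewrite /vnorm2 (bigD1 i) //= big1 => [|j /negbTE ji]; rewrite mxE ?ji eqxx.
  by rewrite addr0 normc2_real expr1n.
by rewrite normc2_real expr0n.
Qed.

Lemma vnorm_eq1 v : vnorm v = 1 <-> vnorm2 v = 1.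
Proof.
split=> [h|h]; last by rewrite /vnorm -/(vnorm2 v) h sqrtr1.
by rewrite -[vnorm2 v]sqr_sqrtr ?vnorm2_ge0 // [Num.sqrt _]h expr1n.
Qed.

Definition sesq A x y : C := (adj x *m A *m y) 0 0.

Lemma sesqE A x y : sesq A x y = \sum_i \sum_j (x i 0)^* * A i j * y j 0.
Proof.
rewrite /sesq mxE exchange_big; apply: eq_bigr => j _.
by rewrite mxE mulr_suml; apply: eq_bigr => i _; rewrite !mxE.
Qed.

Lemma sesqDl A x1 x2 y : sesq A (x1 + x2) y = sesq A x1 y + sesq A x2 y.
Proof. by rewrite /sesq /adj map_mxD linearD /= !mulmxDl mxE. Qed.

Lemma sesqDr A x y1 y2 : sesq A x (y1 + y2) = sesq A x y1 + sesq A x y2.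
Proof. by rewrite /sesq mulmxDr mxE. Qed.

Lemma sesqZl A c x y : sesq A (c *: x) y = c^* * sesq A x y.
Proof.
rewrite !sesqE mulr_sumr; apply: eq_bigr => i _; rewrite mulr_sumr.
by apply: eq_bigr => j _; rewrite !mxE rmorphM /= !mulrA.
Qed.

Lemma sesqZr A c x y : sesq A x (c *: y) = c * sesq A x y.
Proof. by rewrite /sesq -scalemxAr mxE. Qed.

Lemma sesq_addmx A B x y : sesq (A + B) x y = sesq A x y + sesq B x y.
Proof. by rewrite /sesq mulmxDr mulmxDl mxE. Qed.

Lemma sesq_scalemx A c x y : sesq (c *: A) x y = c * sesq A x y.
Proof. by rewrite /sesq -scalemxAr -scalemxAl mxE. Qed.

Lemma sesq_submx A B x y : sesq (A - B) x y = sesq A x y - sesq B x y.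
Proof. by rewrite -scaleN1r sesq_addmx sesq_scalemx mulN1r. Qed.

Lemma sesq_summx m (F : 'I_m -> 'M[C]_d) x y :
  sesq (\sum_a F a) x y = \sum_a sesq (F a) x y.
Proof. by rewrite /sesq mulmx_sumr mulmx_suml summxE. Qed.

Lemma sesq1 x y : sesq 1%:M x y = \sum_i (x i 0)^* * y i 0.
Proof. by rewrite /sesq mulmx1 mxE; apply: eq_bigr => i _; rewrite !mxE. Qed.

Lemma sesq1_vnorm2 x : sesq 1%:M x x = (vnorm2 x)%:C.
Proof. by rewrite sesq1 rmorph_sum; apply: eq_bigr => i _; apply: conjc_mul_normc2. Qed.

Lemma sesq_delta A i j : sesq A (delta_mx i 0) (delta_mx j 0) = A i j.
Proof.
rewrite /sesq; have -> : adj (delta_mx i 0 : 'cV[C]_d) = delta_mx 0 i.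
  by apply/matrixP => a b; rewrite !mxE andbC; case: (_ && _); rewrite ?conjC0 ?conjC1.
by rewrite -rowE -colE !mxE.
Qed.

Lemma norm_sesq_le A v (c : C) : (forall i j, `|A i j| <= c) ->
  `|sesq A v v| <= c * \sum_i \sum_j `|v i 0| * `|v j 0|.
Proof.
move=> hA; rewrite sesqE mulr_sumr; apply: (le_trans (ler_norm_sum _ _ _)).
apply: ler_sum => i _; rewrite mulr_sumr; apply: (le_trans (ler_norm_sum _ _ _)).
apply: ler_sum => j _; rewrite !normrM norm_conjC mulrAC mulrC.
by apply: ler_wpM2r; rewrite ?mulr_ge0 ?normr_ge0 ?hA.
Qed.

Lemma psd1 : psd (1%:M : 'M[C]_d).
Proof. by move=> v; rewrite -/(sesq _ _ _) sesq1_vnorm2 lecR vnorm2_ge0. Qed.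

Lemma psd_sesq_Re_ge0 A v : psd A -> 0 <= complex.Re (sesq A v v).
Proof. by move=> hA; case: (ge0c_real (hA v)). Qed.

Lemma psd_sesq_real A v : psd A -> sesq A v v = (complex.Re (sesq A v v))%:C.
Proof. by move=> hA; case: (ge0c_real (hA v)). Qed.

Lemma psd_sesqC A x y : psd A -> sesq A y x = (sesq A x y)^*.
Proof.
move=> hA; have := hA (x + y); have := hA (x + 'i *: y).
have := hA x; have := hA y; rewrite -!/(sesq _ _ _).
rewrite !(sesqDl, sesqDr, sesqZl, sesqZr).
move: (sesq A x x) (sesq A x y) (sesq A y x) (sesq A y y) => [a1 a2] [b1 b2] [c1 c2] [e1 e2].
rewrite !lecE /=; simpc => /andP[/eqP h1 _] /andP[/eqP h2 _] /andP[/eqP h3 _] /andP[/eqP h4 _].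
by simpc; congr (_ +i* _); lra.
Qed.

Lemma psd_sesq_Re_pair A x y : psd A ->
  complex.Re (sesq A x y) + complex.Re (sesq A y x) <=
  complex.Re (sesq A x x) + complex.Re (sesq A y y).
Proof.
move=> hA; have := hA (x + (-1) *: y); rewrite -/(sesq _ _ _).
rewrite !(sesqDl, sesqDr, sesqZl, sesqZr) rmorphN1 !mulN1r.
move: (sesq A x x) (sesq A x y) (sesq A y x) (sesq A y y) => [a1 a2] [b1 b2] [c1 c2] [e1 e2].
by rewrite lecE /=; simpc => /andP[_ h]; lra.
Qed.

Lemma quadratic_ge0_le (a e N : R) : 0 <= N -> 0 <= e ->
  (forall t, 0 <= a + 2 * t * N + t ^+ 2 * N * e) -> N <= a * e.
Proof.
move=> N0 e0 h; have [e_eq0|e_neq0] := eqVneq e 0.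
  rewrite e_eq0 in h *.
  have [->|N_neq0] := eqVneq N 0; first by rewrite mulr0.
  have Np : 0 < N by rewrite lt_def N_neq0.
  have := h (- (`|a| + 1) / (2 * N)); rewrite mulr0 addr0.
  have -> : 2 * (- (`|a| + 1) / (2 * N)) * N = - (`|a| + 1) by field.
  by have := ler_norm a; lra.
have ep : 0 < e by rewrite lt_def e_neq0.
have := h (- e^-1).
have -> : a + 2 * - e^-1 * N + (- e^-1) ^+ 2 * N * e = a - N / e by field.
by rewrite subr_ge0 ler_pdivrMr // mulrC.
Qed.

Lemma psd_cauchy_schwarz A x y : psd A ->
  normc2 (sesq A x y) <= complex.Re (sesq A x x) * complex.Re (sesq A y y).
Proof.
move=> hA; have hC := psd_sesqC x y hA.
have hx := hA x; have hy := hA y; rewrite -!/(sesq _ _ _) in hx hy.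
apply: quadratic_ge0_le; [exact: normc2_ge0 | exact: psd_sesq_Re_ge0 |] => t.
have := hA (x + ((t%:C) * (sesq A x y)^*) *: y); rewrite -/(sesq _ _ _).
rewrite !(sesqDl, sesqDr, sesqZl, sesqZr) hC.
move: hx hy; move: (sesq A x x) (sesq A x y) (sesq A y y) => [a1 a2] [b1 b2] [e1 e2].
rewrite !lecE /= /normc2; simpc => /andP[/eqP -> _] /andP[/eqP -> _] /andP[_ h].
by rewrite /=; apply: (le_trans h); rewrite le_eqVlt; apply/orP; left; apply/eqP; ring.
Qed.

Lemma psd_diag_real A i : psd A ->
  A i i = (complex.Re (A i i))%:C /\ 0 <= complex.Re (A i i).
Proof. by move=> hA; apply: ge0c_real; rewrite -sesq_delta; apply: hA. Qed.

Lemma psd_diag_eq0 A i j : psd A -> complex.Re (A i i) = 0 ->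
  A i j = 0 /\ A j i = 0.
Proof.
move=> hA hi; split; apply/normc2_eq0/eqP; rewrite eq_le normc2_ge0 andbT.
  by have := psd_cauchy_schwarz (delta_mx i 0) (delta_mx j 0) hA; rewrite !sesq_delta hi mul0r.
by have := psd_cauchy_schwarz (delta_mx j 0) (delta_mx i 0) hA; rewrite !sesq_delta hi mulr0.
Qed.

End SesquilinearForms.

Section OperatorNorm.
Variable R : realType.
Local Notation C := R[i].
Local Open Scope complex_scope.
Variable d : nat.
Implicit Types (A M : 'M[C]_d) (u v : 'cV[C]_d).

Definition frob2 A : R := \sum_a vnorm2 (adj (row a A)).

Lemma vnorm2_mulmx_le_frob2 A v : vnorm2 (A *m v) <= frob2 A * vnorm2 v.
Proof.
rewrite /vnorm2 /frob2 mulr_suml; apply: ler_sum => a _.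
have -> : (A *m v) a 0 = sesq 1%:M (adj (row a A)) v.
  by rewrite /sesq mulmx1 adjK !mxE; apply: eq_bigr => j _; rewrite mxE.
by have := psd_cauchy_schwarz (adj (row a A)) v (@psd1 R d); rewrite !sesq1_vnorm2.
Qed.

Definition opnorm_set A :=
  [set x : R | exists v : 'cV[C]_d, vnorm v = 1 /\ x = vnorm (A *m v)]%classic.

Lemma opnorm_set_ubound A : has_ubound (opnorm_set A).
Proof.
exists (Num.sqrt (frob2 A)) => _ [v [/vnorm_eq1 hv ->]].
rewrite /vnorm -/(vnorm2 _) ler_sqrt; last by apply: sumr_ge0 => a _; apply: vnorm2_ge0.
by have := vnorm2_mulmx_le_frob2 A v; rewrite hv mulr1.
Qed.

Lemma vnorm_mulmx_le_opnorm A v : vnorm v = 1 -> vnorm (A *m v) <= opnorm A.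
Proof. by move=> hv; apply: (ub_le_sup (opnorm_set_ubound A)); exists v. Qed.

Hypothesis d_gt0 : (0 < d)%N.

Lemma opnorm_le A l : (forall v, vnorm2 v = 1 -> vnorm (A *m v) <= l) -> opnorm A <= l.
Proof.
move=> h; apply: ge_sup => [|_ [v [/vnorm_eq1 hv ->]]]; last exact: h.
pose e : 'cV[C]_d := delta_mx (Ordinal d_gt0) 0.
by exists (vnorm (A *m e)), e; split => //; apply/vnorm_eq1/vnorm2_delta.
Qed.

Lemma opnorm_ge0 A : 0 <= opnorm A.
Proof.
apply: le_trans (vnorm_mulmx_le_opnorm A (v := delta_mx (Ordinal d_gt0) 0) _).
  exact: sqrtr_ge0.
exact/vnorm_eq1/vnorm2_delta.
Qed.

Lemma vnorm2_mulmx_le_opnorm A v : vnorm2 (A *m v) <= opnorm A ^+ 2 * vnorm2 v.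
Proof.
have [/vnorm2_eq0 ->|nz] := eqVneq (vnorm2 v) 0.
  by rewrite mulmx0 vnorm2_0 mulr0.
have np : 0 < vnorm2 v by rewrite lt_def nz vnorm2_ge0.
pose s := Num.sqrt (vnorm2 v).
have sp : 0 < s by rewrite sqrtr_gt0.
have s2 : s ^+ 2 = vnorm2 v by rewrite sqr_sqrtr // vnorm2_ge0.
have hw : vnorm ((s^-1)%:C *: v) = 1 by apply/vnorm_eq1; rewrite vnorm2_scale exprVn s2 mulVf.
have := vnorm_mulmx_le_opnorm A hw.
rewrite -scalemxAr /vnorm -/(vnorm2 _) vnorm2_scale -ler_sqr ?nnegrE ?sqrtr_ge0 ?opnorm_ge0 //.
rewrite sqr_sqrtr ?mulr_ge0 ?sqr_ge0 ?vnorm2_ge0 ?invr_ge0 ?sqrtr_ge0 // exprVn s2.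
by move=> h; rewrite -ler_pdivrMr // mulrC.
Qed.

Lemma psd_opnorm_le M l : psd M -> 0 <= l ->
  (forall u, complex.Re (sesq M u u) <= l * vnorm2 u) -> opnorm M <= l.
Proof.
move=> hM l0 hb; apply: opnorm_le => w w1; pose y := M *m w.
have yw : sesq M y w = (vnorm2 y)%:C by rewrite -sesq1_vnorm2 /sesq mulmx1 /y mulmxA.
have := psd_cauchy_schwarz y w hM; rewrite yw normc2_real => CS.
have Mww := hb w; rewrite w1 mulr1 in Mww.
have bound : vnorm2 y ^+ 2 <= (l * vnorm2 y) * l.
  by apply: (le_trans CS); apply: ler_pM; rewrite ?psd_sesq_Re_ge0 ?hb.
rewrite /vnorm -/(vnorm2 _) -(ger0_norm l0) -sqrtr_sqr ler_sqrt ?sqr_ge0 //.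
by have := vnorm2_ge0 y; rewrite -/y; nra.
Qed.

Lemma sesq_le_opnorm M u : complex.Re (sesq M u u) <= opnorm M * vnorm2 u.
Proof.
suff h : complex.Re (sesq M u u) ^+ 2 <= (opnorm M * vnorm2 u) ^+ 2.
  by have := mulr_ge0 (opnorm_ge0 M) (vnorm2_ge0 u); nra.
have -> : sesq M u u = sesq 1%:M u (M *m u) by rewrite /sesq mulmx1 mulmxA.
apply: (le_trans (Re_sqr_le_normc2 _)); apply: (le_trans (psd_cauchy_schwarz _ _ (@psd1 R d))).
rewrite !sesq1_vnorm2 /= mulrC.
apply: le_trans (ler_wpM2r (vnorm2_ge0 u) (vnorm2_mulmx_le_opnorm M u)) _.
by rewrite exprMn expr2 mulrA.
Qed.

Lemma psd_sesq_restrict M (I : {set 'I_d}) u : psd M ->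
  (forall i, i \notin I -> complex.Re (M i i) = 0) ->
  sesq M u u = \sum_(i in I) \sum_(j in I) (u i 0)^* * M i j * u j 0.
Proof.
move=> hM M0; rewrite sesqE (bigID (mem I)) /= [X in _ + X]big1 ?addr0 => [|i iI]; last first.
  by rewrite big1 // => j _; rewrite (psd_diag_eq0 j hM (M0 i iI)).1 mulr0 mul0r.
apply: eq_bigr => i _; rewrite (bigID (mem I)) /= [X in _ + X]big1 ?addr0 // => j jI.
by rewrite (psd_diag_eq0 i hM (M0 j jI)).2 mulr0 mul0r.
Qed.

Lemma psd_sesq_le_card M (I : {set 'I_d}) u : psd M ->
  (forall i, complex.Re (M i i) <= (i \in I)%:R) ->
  complex.Re (sesq M u u) <= #|I|%:R * vnorm2 u.
Proof.
move=> hM hdiag.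
have M0 i : i \notin I -> complex.Re (M i i) = 0.
  move=> iI; apply/eqP; rewrite eq_le (psd_diag_real i hM).2 andbT.
  by have := hdiag i; rewrite (negbTE iI).
pose T i j := complex.Re (sesq M (u i 0 *: delta_mx i 0) (u j 0 *: delta_mx j 0)).
have sesqT : complex.Re (sesq M u u) = \sum_(i in I) \sum_(j in I) T i j.
  rewrite (psd_sesq_restrict _ hM M0) Re_sum; apply: eq_bigr => i _; rewrite Re_sum.
  by apply: eq_bigr => j _; rewrite /T sesqZl sesqZr sesq_delta; congr (complex.Re _); ring.
have Tii i : T i i <= normc2 (u i 0).
  rewrite /T sesqZl sesqZr sesq_delta (psd_diag_real i hM).1 mulrA.
  rewrite conjc_mul_normc2 -rmorphM /= -[X in _ <= X]mulr1 ler_wpM2l ?normc2_ge0 //.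
  by apply: le_trans (hdiag i) _; case: (_ \in _).
(* Each 2x2 principal minor of M is psd: T i j + T j i <= T i i + T j j. *)
have pairT : (\sum_(i in I) \sum_(j in I) T i j) *+ 2 <=
             (\sum_(i in I) T i i) *+ #|I| *+ 2.
  have -> : (\sum_(i in I) \sum_(j in I) T i j) *+ 2 =
            \sum_(i in I) \sum_(j in I) (T i j + T j i).
    by rewrite mulr2n {2}exchange_big -big_split; apply: eq_bigr => i _; rewrite -big_split.
  have -> : (\sum_(i in I) T i i) *+ #|I| *+ 2 =
            \sum_(i in I) \sum_(j in I) (T i i + T j j).
    under [RHS]eq_bigr => i _ do rewrite big_split /= sumr_const.
    by rewrite big_split /= sumr_const sumrMnl mulr2n.
  by apply: ler_sum => i _; apply: ler_sum => j _; apply: psd_sesq_Re_pair.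
rewrite sesqT; apply: le_trans (_ : _ <= (\sum_(i in I) T i i) *+ #|I|) _.
  by move: pairT; rewrite lerMn2r.
rewrite -[X in X <= _]mulr_natl; apply: (ler_wpM2l (ler0n _ _)).
apply: le_trans (_ : _ <= \sum_(i in I) normc2 (u i 0)) _; first exact: ler_sum.
rewrite /vnorm2 [X in _ <= X](bigID (mem I)) /= lerDl.
by apply: sumr_ge0 => i _; apply: normc2_ge0.
Qed.

Lemma psd_opnorm_le_card M (I : {set 'I_d}) : psd M ->
  (forall i, complex.Re (M i i) <= (i \in I)%:R) -> opnorm M <= #|I|%:R.
Proof. by move=> hM hdiag; apply: psd_opnorm_le => // u; apply: psd_sesq_le_card. Qed.

End OperatorNorm.

Section DiagonalCongruence.
Variable R : realType.
Local Notation C := R[i].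
Local Open Scope complex_scope.
Variable d : nat.
Implicit Types (A B : 'M[C]_d) (u v : 'cV[C]_d) (f g : 'I_d -> R).

Definition dscale f u : 'cV[C]_d := \col_i ((f i)%:C * u i 0).

Lemma dscaleM f g u : dscale f (dscale g u) = dscale (fun i => f i * g i) u.
Proof. by apply/matrixP => i j; rewrite !mxE rmorphM mulrA. Qed.

Lemma dscale_ext f g u : f =1 g -> dscale f u = dscale g u.
Proof. by move=> fg; apply/matrixP => i j; rewrite !mxE fg. Qed.

Lemma vnorm2_dscale f u : vnorm2 (dscale f u) = \sum_i f i ^+ 2 * normc2 (u i 0).
Proof. by apply: eq_bigr => i _; rewrite mxE normc2_scale. Qed.

Lemma sesq_diag_cong A B f u v : (forall i j, A i j = (f i)%:C * B i j * (f j)%:C) ->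
  sesq A u v = sesq B (dscale f u) (dscale f v).
Proof.
move=> AB; rewrite !sesqE; apply: eq_bigr => i _; apply: eq_bigr => j _.
by rewrite AB !mxE rmorphM /= conjC_realc; ring.
Qed.

Lemma psd_diag_cong A B f : (forall i j, A i j = (f i)%:C * B i j * (f j)%:C) ->
  psd B -> psd A.
Proof. by move=> AB hB u; rewrite -/(sesq _ _ _) (sesq_diag_cong u u AB); apply: hB. Qed.

Definition supp B i : R := if 0 < complex.Re (B i i) then 1 else 0.

Lemma sesq_supp B f g u : psd B ->
  sesq B (dscale (fun i => f i * supp B i) u) (dscale (fun i => g i * supp B i) u) =
  sesq B (dscale f u) (dscale g u).
Proof.
move=> hB; rewrite !sesqE; apply: eq_bigr => i _; apply: eq_bigr => j _.
rewrite !mxE /supp.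
have [hi|hi] := ltP 0 (complex.Re (B i i)); last first.
  have hi0 : complex.Re (B i i) = 0 by apply/eqP; rewrite eq_le hi (psd_diag_real i hB).2.
  by rewrite (psd_diag_eq0 j hB hi0).1 !mulr0 !mul0r.
have [hj|hj] := ltP 0 (complex.Re (B j j)); last first.
  have hj0 : complex.Re (B j j) = 0 by apply/eqP; rewrite eq_le hj (psd_diag_real j hB).2.
  by rewrite (psd_diag_eq0 i hB hj0).2 !mulr0 !mul0r.
by rewrite !mulr1.
Qed.

Lemma sesq_dephase B v : psd B ->
  sesq (dephase B) v v = (\sum_i complex.Re (B i i) * normc2 (v i 0))%:C.
Proof.
move=> hB; rewrite sesqE rmorph_sum; apply: eq_bigr => i _.
rewrite (bigD1 i) //= big1 => [|j /negbTE ji]; last by rewrite mxE eq_sym ji mulr0 mul0r.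
by rewrite mxE eqxx addr0 (psd_diag_real i hB).1 mulrAC conjc_mul_normc2 rmorphM mulrC.
Qed.

End DiagonalCongruence.

Section RMatrix.
Variable R : realType.
Local Notation C := R[i].
Local Open Scope complex_scope.
Variable d : nat.
Implicit Types (B : 'M[C]_d) (I : {set 'I_d}) (v : 'cV[C]_d).

Definition ind I i : R := (i \in I)%:R.

Definition dinvsqrt B i : R :=
  if 0 < complex.Re (B i i) then (Num.sqrt (complex.Re (B i i)))^-1 else 0.

Lemma projI_diag I : projI I = diag_mx (\row_i (ind I i)%:C).
Proof.
apply/matrixP => i j; rewrite !mxE /ind; case: eqVneq => [->|]; last by rewrite mulr0n.
by case: (_ \in _); rewrite ?mulr1n.
Qed.

Lemma dephase_invsqrt_diag B : dephase_invsqrt B = diag_mx (\row_i (dinvsqrt B i)%:C).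
Proof.
apply/matrixP => i j; rewrite !mxE /dinvsqrt; case: eqVneq => [->|]; last by rewrite mulr0n.
by case: (0 < _); rewrite ?mulr1n.
Qed.

Lemma projI_conjE I B i j :
  (projI I *m B *m projI I) i j = (ind I i)%:C * B i j * (ind I j)%:C.
Proof. by rewrite projI_diag mul_mx_diag mul_diag_mx !mxE. Qed.

Definition Rproj I B := projI I *m Rmat B *m projI I.

Lemma RprojE I B i j :
  Rproj I B i j = (ind I i * dinvsqrt B i)%:C * B i j * (ind I j * dinvsqrt B j)%:C.
Proof.
rewrite /Rproj /Rmat projI_diag dephase_invsqrt_diag.
by rewrite !mul_mx_diag !mul_diag_mx !mxE !rmorphM; ring.
Qed.

Lemma psd_projI_conj I B : psd B -> psd (projI I *m B *m projI I).
Proof. exact/psd_diag_cong/projI_conjE. Qed.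

Lemma psd_Rproj I B : psd B -> psd (Rproj I B).
Proof. exact/psd_diag_cong/RprojE. Qed.

Lemma dinvsqrt_sqrt B i : dinvsqrt B i * Num.sqrt (complex.Re (B i i)) = supp B i.
Proof.
rewrite /dinvsqrt /supp; case: ifP => [h|]; last by rewrite mul0r.
by rewrite mulVf // gt_eqF // sqrtr_gt0.
Qed.

Lemma Re_diag_dinvsqrt B i : complex.Re (B i i) * dinvsqrt B i ^+ 2 = supp B i.
Proof.
rewrite /dinvsqrt /supp; case: ifP => [h|]; last by rewrite expr0n mulr0.
by rewrite exprVn sqr_sqrtr ?ltW // mulfV // gt_eqF.
Qed.

Lemma supp_le1 B i : supp B i <= 1.
Proof. by rewrite /supp; case: ifP; rewrite ?ler01. Qed.

Lemma Rproj_diag I B i : psd B -> Rproj I B i i = (ind I i * supp B i)%:C.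
Proof.
move=> hB; rewrite RprojE (psd_diag_real i hB).1 -!rmorphM /= -Re_diag_dinvsqrt.
have -> : ind I i * dinvsqrt B i * complex.Re (B i i) * (ind I i * dinvsqrt B i) =
          ind I i ^+ 2 * (complex.Re (B i i) * dinvsqrt B i ^+ 2) by ring.
by rewrite /ind; case: (i \in I); rewrite ?expr0n ?expr1n.
Qed.

Definition dephase_gap (l : R) I B := l%:C *: dephase B - projI I *m B *m projI I.

Lemma loewner_dephase_gap l I B :
  loewner_le (projI I *m B *m projI I) (l%:C *: dephase B) = psd (dephase_gap l I B).
Proof. by []. Qed.

Lemma sesq_dephase_gap l I B v : psd B ->
  sesq (dephase_gap l I B) v v =
  (l * \sum_i complex.Re (B i i) * normc2 (v i 0) -
   complex.Re (sesq (projI I *m B *m projI I) v v))%:C.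
Proof.
move=> hB; rewrite sesq_submx sesq_scalemx sesq_dephase //.
by rewrite {1}(psd_sesq_real v (psd_projI_conj I hB)) rmorphB rmorphM.
Qed.

Lemma sesq_projI_conj_Rproj I B v : psd B ->
  sesq (projI I *m B *m projI I) v v =
  sesq (Rproj I B) (dscale (fun i => Num.sqrt (complex.Re (B i i))) v)
                   (dscale (fun i => Num.sqrt (complex.Re (B i i))) v).
Proof.
move=> hB; rewrite (sesq_diag_cong _ _ (projI_conjE I B)).
rewrite (sesq_diag_cong _ _ (RprojE I B)) !dscaleM -(sesq_supp (ind I) (ind I) v hB).
by congr sesq; apply: dscale_ext => i /=; rewrite -mulrA dinvsqrt_sqrt.
Qed.

Lemma Rproj_opnorm_leP I B l : (0 < d)%N -> psd B -> 0 <= l ->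
  opnorm (Rproj I B) <= l <-> loewner_le (projI I *m B *m projI I) (l%:C *: dephase B).
Proof.
rewrite loewner_dephase_gap => d_gt0 hB l0; split=> [hop v|hL].
  rewrite -/(sesq _ _ _) sesq_dephase_gap // ler0c subr_ge0 sesq_projI_conj_Rproj //.
  apply: le_trans (sesq_le_opnorm d_gt0 _ _) _.
  have -> : vnorm2 (dscale (fun i => Num.sqrt (complex.Re (B i i))) v) =
            \sum_i complex.Re (B i i) * normc2 (v i 0).
    by rewrite vnorm2_dscale; apply: eq_bigr => i _; rewrite sqr_sqrtr // (psd_diag_real i hB).2.
  apply: ler_wpM2r hop; apply: sumr_ge0 => i _.
  by rewrite mulr_ge0 ?normc2_ge0 ?(psd_diag_real i hB).2.
apply: psd_opnorm_le => // [|u]; first exact: psd_Rproj.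
have := hL (dscale (dinvsqrt B) u); rewrite -/(sesq _ _ _) sesq_dephase_gap //.
rewrite ler0c subr_ge0 (sesq_diag_cong _ _ (projI_conjE I B)).
rewrite (sesq_diag_cong _ _ (RprojE I B)) !dscaleM => h.
apply: (le_trans h); apply: (ler_wpM2l l0); apply: ler_sum => i _.
rewrite mxE normc2_scale mulrA Re_diag_dinvsqrt.
by rewrite -[X in _ <= X]mul1r ler_wpM2r ?normc2_ge0 ?supp_le1.
Qed.

End RMatrix.

Arguments ind {R d}.

Section Log2.
Variable R : realType.

Lemma ln2_gt0 : 0 < ln (2 : R).
Proof. by rewrite ln_gt0 // ltr1n. Qed.

Lemma powR2E (nu : R) : 2 `^ nu = expR (nu * ln 2).
Proof. by rewrite /powR pnatr_eq0. Qed.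

Lemma log2eE (x : R) : 0 < x -> log2e x = (ln x / ln 2)%:E.
Proof. by rewrite /log2e => ->. Qed.

Lemma log2e_le_powR (x nu : R) : (log2e x <= nu%:E)%E <-> x <= 2 `^ nu.
Proof.
rewrite /log2e powR2E; case: ifP => [x0|x_le0]; last first.
  by split=> _; [rewrite (le_trans _ (ltW (expR_gt0 _))) // leNgt x_le0 | exact: leNye].
by rewrite lee_fin ler_pdivrMr ?ln2_gt0 // -ler_ln ?posrE ?expR_gt0 // expRK.
Qed.

Lemma powR2_log2 (x : R) : 0 < x -> 2 `^ (ln x / ln 2) = x.
Proof. by move=> x0; rewrite powR2E -mulrA mulVf ?mulr1 ?lnK ?gt_eqF ?ln2_gt0. Qed.

End Log2.

Section Muk.
Variable R : realType.
Local Notation C := R[i].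
Local Open Scope complex_scope.
Variable d : nat.
Implicit Types (B : 'M[C]_d) (I : {set 'I_d}).
Hypothesis d_gt0 : (0 < d)%N.

Lemma opnorm_Rproj_le_card I B : psd B -> opnorm (Rproj I B) <= #|I|%:R.
Proof.
move=> hB; apply: (psd_opnorm_le_card d_gt0) => [|i]; first exact: psd_Rproj.
by rewrite Rproj_diag //= /ind -[X in _ <= X]mulr1 ler_wpM2l ?supp_le1.
Qed.

Lemma opnorm_Rproj_set1_ge1 B i : psd B ->
  0 < complex.Re (B i i) -> 1 <= opnorm (Rproj [set i] B).
Proof.
move=> hB hi; have hv : vnorm (delta_mx i 0 : 'cV[C]_d) = 1 by apply/vnorm_eq1/vnorm2_delta.
have e : Rproj [set i] B *m delta_mx i 0 = delta_mx i 0 :> 'cV[C]_d.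
  rewrite -colE; apply/matrixP => j l.
  rewrite (ord1 l) [col _ _ _ _]mxE [delta_mx _ _ _ _]mxE; case: eqVneq => [->|ji].
    by rewrite Rproj_diag // /ind /supp set11 hi mulr1.
  by rewrite RprojE /ind inE (negbTE ji) !mul0r.
by have := vnorm_mulmx_le_opnorm (Rproj [set i] B) hv; rewrite e hv.
Qed.

Lemma muk_leP k B nu : psd B ->
  (muk k B <= nu%:E)%E <->
  (forall I, (#|I| <= k)%N ->
     loewner_le (projI I *m B *m projI I) ((2 `^ nu)%:C *: dephase B)).
Proof.
move=> hB; have l0 : 0 <= 2 `^ nu by apply: powR_ge0.
split=> [/bigmax_leP[_ h] I hI | h].
  by apply/Rproj_opnorm_leP/log2e_le_powR/h.
by apply/bigmax_leP; split=> [|I hI]; [exact: leNye | apply/log2e_le_powR/Rproj_opnorm_leP/h].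
Qed.

Lemma state_diag_gt0 B : is_state B -> exists i, 0 < complex.Re (B i i).
Proof.
move=> [_ trB]; apply/existsP; apply: contraT; rewrite negb_exists => /forallP hle.
have : complex.Re (\tr B) <= 0.
  by rewrite /mxtrace Re_sum; apply: sumr_le0 => i _; rewrite leNgt hle.
by rewrite trB /= leNgt ltr01.
Qed.

Lemma muk_ge0 k B : (0 < k)%N -> is_state B -> (0 <= muk k B)%E.
Proof.
move=> k_gt0 hS; have [i hi] := state_diag_gt0 hS.
have k1 : (#|[set i]| <= k)%N by rewrite cards1.
apply: le_trans (le_bigmax_cond -oo%E (fun I => log2e (opnorm (Rproj I B))) k1).
have h1 := opnorm_Rproj_set1_ge1 hS.1 hi.
by rewrite log2eE ?(lt_le_trans ltr01 h1) // lee_fin divr_ge0 ?ln_ge0 ?ler1n.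
Qed.

Lemma muk_le_log2 k B : (0 < k)%N -> psd B -> (muk k B <= log2e k%:R)%E.
Proof.
move=> k_gt0 hB; rewrite log2eE ?ltr0n //; apply/bigmax_leP; split=> [|I hI].
  exact: leNye.
apply/log2e_le_powR; rewrite powR2_log2 ?ltr0n //.
by apply: le_trans (opnorm_Rproj_le_card I hB) _; rewrite ler_nat.
Qed.

Lemma muk_fin_num k B : (0 < k)%N -> is_state B -> muk k B \is a fin_num.
Proof.
move=> k_gt0 hS; rewrite ge0_fin_numE ?muk_ge0 //.
by apply: le_lt_trans (muk_le_log2 k_gt0 hS.1) _; rewrite log2eE ?ltr0n // ltry.
Qed.

Lemma muk_ereal_inf k B : (0 < k)%N -> is_state B ->
  muk k B = ereal_inf [set nu%:E | nu in [set nu : R | forall I, (#|I| <= k)%N ->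
    loewner_le (projI I *m B *m projI I) ((2 `^ nu)%:C *: dephase B)]].
Proof.
move=> k_gt0 hS; have muk_fin := muk_fin_num k_gt0 hS.
apply/le_anti/andP; split.
  by apply/ereal_infP => _ [nu /(muk_leP k nu hS.1) ? <-].
apply: ge_ereal_inf; exists (muk k B) => //; exists (fine (muk k B)); last exact: fineK.
by apply/(muk_leP k _ hS.1); rewrite fineK.
Qed.

End Muk.

Section StrictlyIncoherent.
Variable R : realType.
Local Notation C := R[i].
Local Open Scope complex_scope.
Variable d : nat.
Implicit Types (K X : 'M[C]_d) (I J : {set 'I_d}).

Lemma sesq_conj_adj K X v : sesq (K *m X *m adj K) v v = sesq X (adj K *m v) (adj K *m v).
Proof. by rewrite /sesq adjM adjK !mulmxA. Qed.

Lemma psd_kraus_apply m (K : 'I_m -> 'M[C]_d) X : psd X -> psd (kraus_apply K X).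
Proof.
move=> hX v; rewrite -/(sesq _ _ _) sesq_summx; apply: sumr_ge0 => a _.
by rewrite sesq_conj_adj; apply: hX.
Qed.

Lemma mxtrace_kraus_apply m (K : 'I_m -> 'M[C]_d) X :
  \sum_a adj (K a) *m K a = 1%:M -> \tr (kraus_apply K X) = \tr X.
Proof.
move=> hK; rewrite /kraus_apply raddf_sum /=.
under eq_bigr => a _ do rewrite mxtrace_mulC mulmxA.
by rewrite -raddf_sum /= -mulmx_suml hK mul1mx.
Qed.

Lemma SIO_kraus_state m (K : 'I_m -> 'M[C]_d) X :
  SIO_kraus K -> is_state X -> is_state (kraus_apply K X).
Proof.
move=> [_ hK] [hX trX]; split; first exact: psd_kraus_apply.
by rewrite mxtrace_kraus_apply.
Qed.

Lemma maps_basis_col_uniq K i i' j : maps_basis_to_basis K ->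
  K i j != 0 -> K i' j != 0 -> i = i'.
Proof.
move=> /(_ j)[r hr] hi hi'.
have [->|/hr/eqP] := eqVneq i r; last by rewrite (negbTE hi).
by have [//|/hr/eqP] := eqVneq i' r; rewrite (negbTE hi').
Qed.

Lemma maps_basis_adj_row_uniq K i j j' : maps_basis_to_basis (adj K) ->
  K i j != 0 -> K i j' != 0 -> j = j'.
Proof.
move=> hK hj hj'; apply: (@maps_basis_col_uniq (adj K) j j' i hK);
  by rewrite !mxE (conjC_eq0 (K _ _)).
Qed.

Lemma dephase_conj_adj K X : maps_basis_to_basis K -> maps_basis_to_basis (adj K) ->
  dephase (K *m X *m adj K) = K *m dephase X *m adj K.
Proof.
move=> hK hKt; apply/matrixP => a b.
have -> : (K *m dephase X *m adj K) a b = \sum_l K a l * X l l * (K b l)^*.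
  rewrite mxE; apply: eq_bigr => l _; rewrite !mxE (bigD1 l) //= big1 ?addr0 => [|j /negbTE jl].
    by rewrite mxE eqxx.
  by rewrite mxE jl mulr0.
rewrite mxE; case: eqVneq => [<-|ab]; last first.
  apply/esym/big1 => l _.
  have [->|Kal] := eqVneq (K a l) 0; first by rewrite !mul0r.
  have [->|Kbl] := eqVneq (K b l) 0; first by rewrite conjC0 mulr0.
  by rewrite (maps_basis_col_uniq hK Kal Kbl) eqxx in ab.
rewrite mxE; apply: eq_bigr => l _; rewrite mxE mulr_suml (bigD1 l) //= big1 ?addr0 => [|j jl].
  by rewrite !mxE.
rewrite !mxE; have [->|Kaj] := eqVneq (K a j) 0; first by rewrite !mul0r.
have [->|Kal] := eqVneq (K a l) 0; first by rewrite conjC0 mulr0.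
by rewrite (maps_basis_adj_row_uniq hKt Kaj Kal) eqxx in jl.
Qed.

Definition mx_preim K J : {set 'I_d} := [set j | [exists i in J, K i j != 0]].

Lemma mem_mx_preim K J i j : maps_basis_to_basis K -> K i j != 0 ->
  (j \in mx_preim K J) = (i \in J).
Proof.
move=> hK Kij; rewrite inE; apply/existsP/idP => [[i' /andP[i'J Ki'j]]|iJ].
  by rewrite (maps_basis_col_uniq hK Kij Ki'j).
by exists i; rewrite iJ.
Qed.

Lemma card_mx_preim K J : maps_basis_to_basis (adj K) -> (#|mx_preim K J| <= #|J|)%N.
Proof.
move=> hKt; pose f j := odflt j [pick i in J | K i j != 0].
have fP j : j \in mx_preim K J -> (f j \in J) && (K (f j) j != 0).
  rewrite inE /f => /existsP[i hi]; case: pickP => [i' -> //|/(_ i)].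
  by rewrite hi.
have f_inj : {in mx_preim K J &, injective f}.
  move=> j1 j2 /fP/andP[_ K1] /fP/andP[_ K2] f12.
  by rewrite f12 in K1; apply: maps_basis_adj_row_uniq hKt K1 K2.
rewrite -(card_in_imset f_inj); apply/subset_leq_card/fintype.subsetP.
by move=> _ /imsetP[j /fP/andP[fJ _] ->].
Qed.

Lemma projI_mulmx K J : maps_basis_to_basis K ->
  projI J *m K = K *m projI (mx_preim K J).
Proof.
move=> hK; apply/matrixP => i j; rewrite !projI_diag mul_mx_diag mul_diag_mx !mxE.
have [->|Kij] := eqVneq (K i j) 0; first by rewrite mulr0 mul0r.
by rewrite /ind (mem_mx_preim _ hK Kij) mulrC.
Qed.

Lemma adj_projI J : adj (projI J) = projI J :> 'M[C]_d.
Proof.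
apply/matrixP => i j; rewrite !mxE eq_sym; case: eqVneq => [->|]; rewrite ?conjC0 //.
by case: (_ \in _); rewrite ?conjC0 ?conjC1.
Qed.

Lemma adj_mulmx_projI K J : maps_basis_to_basis K ->
  adj K *m projI J = projI (mx_preim K J) *m adj K.
Proof. by move=> hK; rewrite -{1}adj_projI -adjM projI_mulmx // adjM adj_projI. Qed.

Lemma projI_conj_kraus K X J : maps_basis_to_basis K ->
  projI J *m (K *m X *m adj K) *m projI J =
  K *m (projI (mx_preim K J) *m X *m projI (mx_preim K J)) *m adj K.
Proof.
by move=> hK; rewrite !mulmxA projI_mulmx // -!mulmxA adj_mulmx_projI.
Qed.

Lemma dephase_sum m (F : 'I_m -> 'M[C]_d) : dephase (\sum_a F a) = \sum_a dephase (F a).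
Proof.
apply/matrixP => i j; rewrite !(mxE, summxE); case: eqVneq => [->|ij].
  by apply: eq_bigr => a _; rewrite mxE eqxx.
by apply/esym/big1 => a _; rewrite mxE (negbTE ij).
Qed.

Lemma SIO_kraus_loewner_dephase m (K : 'I_m -> 'M[C]_d) X k (l : R) : SIO_kraus K ->
  (forall I, (#|I| <= k)%N -> loewner_le (projI I *m X *m projI I) (l%:C *: dephase X)) ->
  forall J, (#|J| <= k)%N ->
    loewner_le (projI J *m kraus_apply K X *m projI J) (l%:C *: dephase (kraus_apply K X)).
Proof.
move=> [hK _] hX J hJ v; rewrite -/(sesq _ _ _) /kraus_apply dephase_sum.
under eq_bigr => a _ do rewrite (dephase_conj_adj _ (hK a).1 (hK a).2).
rewrite mulmx_sumr mulmx_suml.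
under [X in _ - X]eq_bigr => a _ do rewrite (projI_conj_kraus _ _ (hK a).1).
rewrite scaler_sumr -sumrB sesq_summx; apply: sumr_ge0 => a _.
rewrite scalemxAl scalemxAr -mulmxBl -mulmxBr sesq_conj_adj; apply: hX.
exact: leq_trans (card_mx_preim _ (hK a).2) hJ.
Qed.

Lemma muk_SIO_le m (K : 'I_m -> 'M[C]_d) k X : (0 < d)%N -> (0 < k)%N ->
  SIO_kraus K -> is_state X -> (muk k (kraus_apply K X) <= muk k X)%E.
Proof.
move=> d_gt0 k_gt0 hK hX; have /fineK muk_fin := muk_fin_num d_gt0 k_gt0 hX.
rewrite -muk_fin; apply/(muk_leP d_gt0 _ _ (SIO_kraus_state hK hX).1).
by apply: (SIO_kraus_loewner_dephase hK); apply/(muk_leP d_gt0 _ _ hX.1); rewrite muk_fin.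
Qed.

End StrictlyIncoherent.

Section LowerSemicontinuity.
Variable R : realType.
Local Notation C := R[i].
Local Open Scope complex_scope.

Variable d : nat.
Implicit Types (X : 'M[C]_d) (I : {set 'I_d}).

Lemma dephaseB X Y : dephase (X - Y) = dephase X - dephase Y :> 'M[C]_d.
Proof. by apply/matrixP => i j; rewrite !mxE; case: eqP; rewrite ?subr0 // mxE. Qed.

Lemma dephase_gapB l I X Y :
  dephase_gap l I X - dephase_gap l I Y = dephase_gap l I (X - Y).
Proof.
by rewrite /dephase_gap dephaseB scalerBr mulmxBr mulmxBl !opprD !opprK addrACA.
Qed.

Lemma dephase_gapE l I X i j : dephase_gap l I X i j =
  l%:C * (if i == j then X i i else 0) - (ind I i)%:C * X i j * (ind I j)%:C.
Proof.
by rewrite /dephase_gap mxE [X in _ + X]mxE [X in X - _]mxE [dephase X i j]mxE projI_conjE.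
Qed.

Lemma norm_dephase_gap_le l I X (e : R) : 0 <= l -> (forall i j, `|X i j| <= e%:C) ->
  forall i j, `|dephase_gap l I X i j| <= ((l + 1) * e)%:C.
Proof.
move=> l0 hX i j; rewrite dephase_gapE.
apply: (le_trans (ler_normB _ _)); rewrite mulrDl mul1r rmorphD /= rmorphM /=.
apply: lerD.
  rewrite normrM ger0_norm ?ler0c // ler_wpM2l ?ler0c //.
  by case: eqP => _; rewrite ?normr0 ?(le_trans (normr_ge0 _) (hX i i)).
have ind_le1 k : `|(ind I k)%:C| <= 1 by rewrite /ind rmorph_nat normr_nat lern1 leq_b1.
rewrite !normrM -[e%:C]mulr1 -[e%:C]mul1r.
by rewrite ler_pM ?mulr_ge0 ?normr_ge0 ?ler_pM ?normr_ge0 ?hX ?ind_le1.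
Qed.

Lemma muk_gt_dephase_gap k X (t : R) : (0 < d)%N -> psd X -> (t%:E < muk k X)%E ->
  exists2 I : {set 'I_d}, (#|I| <= k)%N &
    exists v, complex.Re (sesq (dephase_gap (2 `^ t) I X) v v) < 0.
Proof.
move=> d_gt0 hX ht; have : ~ (muk k X <= t%:E)%E by rewrite leNgt ht.
move/(muk_leP d_gt0 k t hX)/existsNP => [I /not_implyP[hI /existsNP[v hv]]].
exists I => //; exists v; rewrite ltNge; apply/negP => h; apply: hv.
by move: h; rewrite -/(dephase_gap _ I X) -/(sesq _ _ _) sesq_dephase_gap // ler0c.
Qed.

Lemma muk_lsc k : (0 < d)%N -> lsc_on_states (fun rho : 'M[C]_d => muk k rho).
Proof.
move=> d_gt0 rho [rho_psd _] t ht; pose l := (2 : R) `^ t.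
have l0 : 0 <= l by apply: powR_ge0.
have [I hI [v gap_lt0]] := muk_gt_dephase_gap d_gt0 rho_psd ht.
pose B := \sum_i \sum_j `|v i 0| * `|v j 0|.
have /ge0c_real[BE B0] : 0 <= B.
  by apply: sumr_ge0 => i _; apply: sumr_ge0 => j _; rewrite mulr_ge0.
pose s := - complex.Re (sesq (dephase_gap l I rho) v v).
have s_gt0 : 0 < s by rewrite oppr_gt0.
(* The gap is linear in the state and its entries move by at most (l + 1) eps,
   so its value at v moves by at most (l + 1) eps B < s. *)
pose eps := s / ((l + 1) * (complex.Re B + 1)).
have eps_gt0 : 0 < eps by rewrite divr_gt0 ?mulr_gt0 ?ltr_wpDl.
exists eps => [//|sigma [sigma_psd _] close]; rewrite ltNge; apply/negP.
move/(muk_leP d_gt0 k t sigma_psd)/(_ I hI v)/Re_le; rewrite -/(sesq _ _ _) /= => gap_ge0.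
have : complex.Re (sesq (dephase_gap l I sigma) v v) -
       complex.Re (sesq (dephase_gap l I rho) v v) <= (l + 1) * eps * complex.Re B.
  rewrite -ReB -sesq_submx dephase_gapB; apply: le_trans (Re_le_Re_norm _) _.
  have close' i j : `|(sigma - rho) i j| <= eps%:C by rewrite !mxE ltW.
  apply: le_trans (Re_le (norm_sesq_le _ (norm_dephase_gap_le I l0 close'))) _.
  by rewrite -/B BE -rmorphM.
have : (l + 1) * eps * complex.Re B < s.
  have l1 : 0 < l + 1 by rewrite ltr_wpDl.
  have B1 : 0 < complex.Re B + 1 by rewrite ltr_wpDl.
  have -> : (l + 1) * eps * complex.Re B = s * (complex.Re B / (complex.Re B + 1)).
    by rewrite /eps; field; rewrite !gt_eqF.
  by rewrite -[X in _ < X]mulr1 ltr_pM2l // ltr_pdivrMr // mul1r ltrDl.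
move=> lt_s /le_lt_trans/(_ lt_s); rewrite /s ltrBlDr addNr.
by rewrite ltNge gap_ge0.
Qed.

End LowerSemicontinuity.

Unset Implicit Arguments.

Theorem lemma3 (R : realType) (d k : nat) (hk1 : (1 <= k)%N) (hkd : (k <= d)%N) :
  (* (a) *)
  (forall rho : 'M[R[i]]_d, is_state rho ->
     (0 <= muk k rho)%E /\ (muk k rho <= log2e (k%:R : R))%E) /\
  (* (b) *)
  (forall rho : 'M[R[i]]_d, is_state rho ->
     muk k rho = ereal_inf [set nu%:E | nu in [set nu : R |
       forall I : {set 'I_d}, (#|I| <= k)%N ->
         loewner_le (projI I *m rho *m projI I)
                    (((2 : R) `^ nu)%:C%C *: dephase rho)]]) /\
  (* (c) *)
  (forall (m : nat) (K : 'I_m -> 'M[R[i]]_d), SIO_kraus K ->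
     forall rho : 'M[R[i]]_d, is_state rho ->
       (muk k (kraus_apply K rho) <= muk k rho)%E) /\
  (* (d) *)
  lsc_on_states (fun rho : 'M[R[i]]_d => muk k rho).
Proof.
have d_gt0 : (0 < d)%N := leq_trans hk1 hkd.
split; [|split; [|split]].
- by move=> rho hS; split; [exact: (muk_ge0 hk1 hS) | exact: (muk_le_log2 d_gt0 hk1 hS.1)].
- by move=> rho hS; exact: (muk_ereal_inf d_gt0 hk1 hS).
- by move=> m K hK rho hS; exact: (muk_SIO_le d_gt0 hk1 hK hS).
- exact: muk_lsc d_gt0.
Qed.
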